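(* Let $G=(S,\Sigma,u,\{A_\sigma\}_{\sigma\in\Sigma},v)$ be a $k$-state GFA over a finite alphabet $\Sigma$ and let $\lambda\in\mathbb R$. Then there exists a one-way PFA $P$ over the same alphabet $\Sigma$ with at most $2k+6$ states such that for every word $w\in\Sigma^\ast$, \[ f_P(w)>\tfrac12 \iff f_G(w)>\lambda. \]
   Context: Let $\Sigma$ be a finite alphabet and $\Sigma^\ast$ the set of finite words over it. A generalized finite automaton (GFA) over $\Sigma$ with $k$ states is a tuple $G=(S,\Sigma,u,\{A_\sigma\}_{\sigma\in\Sigma},v)$ with $|S|=k$, $u\in\mathbb R^{1\times k}$ a row vector, each $A_\sigma\in\mathbb R^{k\times k}$ an arbitrary real matrix, and $v\in\mathbb R^{k\times 1}$ a column vector; for $w=\sigma_1\cdots\sigma_m$ its value is $f_G(w)=uA_{\sigma_1}\cdots A_{\sigma_m}v$ (so $f_G(\varepsilon)=uv$). A one-way PFA (probabilistic finite automaton, end-marker model) over $\Sigma$ is a tuple $P=(S',\Sigma,\pi,\{P_\sigma\}_{\sigma\in\Sigma},P_{\#},F)$, where $S'$ is a finite state set (its number of states is $|S'|$), $\pi$ is an initial probability distribution (row vector) on $S'$, each $P_\sigma$ and $P_\#$ are row-stochastic $|S'|\times|S'|$ matrices, and $F\subseteq S'$. For $w=\sigma_1\cdots\sigma_m$, $f_P(w)=\pi P_{\sigma_1}\cdots P_{\sigma_m}P_\#\mathbf 1_F$, where $\mathbf 1_F$ is the indicator column vector of $F$. *)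

From HB Require Import structures.
From mathcomp Require Import all_boot all_order all_algebra.
From mathcomp Require Import reals.
Set Implicit Arguments. Unset Strict Implicit. Unset Printing Implicit Defensive.
Import Order.TTheory GRing.Theory Num.Theory.
Local Open Scope ring_scope.

Definition mxword (R : ringType) (Sigma : Type) (n : nat)
  (A : Sigma -> 'M[R]_n) (w : seq Sigma) : 'M[R]_n :=
  foldr (fun s M => A s *m M) 1%:M w.

Record gfa (R : ringType) (Sigma : Type) (k : nat) := GFA {
  gfa_u : 'rV[R]_k;
  gfa_A : Sigma -> 'M[R]_k;
  gfa_v : 'cV[R]_k }.

Definition gfa_fun (R : ringType) (Sigma : Type) (k : nat) (G : gfa R Sigma k)
  (w : seq Sigma) : R :=
  (gfa_u G *m mxword (gfa_A G) w *m gfa_v G) 0 0.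

(* Data of a one-way PFA (end-marker model) with n states 'I_n. *)
Record pfa (R : ringType) (Sigma : Type) (n : nat) := PFA {
  pfa_init : 'rV[R]_n;
  pfa_trans : Sigma -> 'M[R]_n;
  pfa_end : 'M[R]_n;
  pfa_final : {set 'I_n} }.

Definition row_stochastic (R : numDomainType) (m n : nat) (M : 'M[R]_(m, n)) : Prop :=
  (forall i j, 0 <= M i j) /\ (forall i, \sum_j M i j = 1).

Definition is_pfa (R : numDomainType) (Sigma : Type) (n : nat) (P : pfa R Sigma n) : Prop :=
  row_stochastic (pfa_init P) /\
  (forall s, row_stochastic (pfa_trans P s)) /\
  row_stochastic (pfa_end P).

Definition indicator_col (R : ringType) (n : nat) (F : {set 'I_n}) : 'cV[R]_n :=
  \col_i (if i \in F then 1 else 0).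

Definition pfa_fun (R : ringType) (Sigma : Type) (n : nat) (P : pfa R Sigma n)
  (w : seq Sigma) : R :=
  (pfa_init P *m mxword (pfa_trans P) w *m pfa_end P *m indicator_col R (pfa_final P)) 0 0.

From HB Require Import structures.
From mathcomp Require Import all_boot all_order all_algebra.
From mathcomp Require Import reals.
From mathcomp.algebra_tactics Require Import ring lra.
From mathcomp Require Import zify.
Import Order.TTheory GRing.Theory Num.Theory.
Local Open Scope ring_scope.
Set Implicit Arguments. Unset Strict Implicit. Unset Printing Implicit Defensive.

(* Turakainen's construction.  One extra state carrying -lambda moves the
   threshold to 0.  A real matrix B on m states is simulated by a stochastic
   matrix S_B on 1 + 2m states: the two copies of the state space carry
   c (|B| + B) / 2 and c (|B| - B) / 2 with c = 1 / (1 + sum |B_ij|), and an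
   absorbing first state takes up the missing row mass.  With E = (0; I; -I)
   this gives S_B E = c E B, so along a word the stochastic product intertwines
   with the automaton product up to a positive factor.  Building the initial
   distribution from u in the same way, and letting the end-marker accept from
   state i with probability (1 + c' (E v)_i) / 2, yields
   f_P(w) = (1 + C_w (f_G(w) - lambda)) / 2 with C_w > 0. *)

Lemma col_mxOver (T : Type) (S : {pred T}) m1 m2 n
    (A : 'M[T]_(m1, n)) (B : 'M[T]_(m2, n)) :
  A \is a mxOver S -> B \is a mxOver S -> col_mx A B \is a mxOver S.
Proof.
move=> /mxOverP SA /mxOverP SB; apply/mxOverP => i j.
by rewrite -(splitK i); case: (split i) => i'; rewrite ?col_mxEu ?col_mxEd.
Qed.

Lemma row_mxOver (T : Type) (S : {pred T}) m n1 n2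
    (A : 'M[T]_(m, n1)) (B : 'M[T]_(m, n2)) :
  A \is a mxOver S -> B \is a mxOver S -> row_mx A B \is a mxOver S.
Proof.
move=> /mxOverP SA /mxOverP SB; apply/mxOverP => i j.
by rewrite -(splitK j); case: (split j) => j'; rewrite ?row_mxEl ?row_mxEr.
Qed.

Section Mxword.
Variables (R : comNzRingType) (Sigma : Type).

Lemma mxword_nil n (A : Sigma -> 'M[R]_n) : mxword A [::] = 1%:M.
Proof. by []. Qed.

Lemma mxword_cons n (A : Sigma -> 'M[R]_n) s w :
  mxword A (s :: w) = A s *m mxword A w.
Proof. by []. Qed.

Lemma mxword_block1 n (A : Sigma -> 'M[R]_n) w :
  mxword (fun s => block_mx (1%:M : 'M_1) 0 0 (A s)) w =
  block_mx 1%:M 0 0 (mxword A w).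
Proof.
elim: w => [|s w IHw]; first by rewrite !mxword_nil -scalar_mx_block.
by rewrite !mxword_cons IHw mulmx_block !mulmx0 !mul0mx !addr0 !add0r mul1mx.
Qed.

Lemma mxword_fixed n m (A : Sigma -> 'M[R]_n) (x : 'M[R]_(n, m)) :
  (forall s, A s *m x = x) -> forall w, mxword A w *m x = x.
Proof.
move=> Ax; elim=> [|s w IHw]; first by rewrite mxword_nil mul1mx.
by rewrite mxword_cons -mulmxA IHw Ax.
Qed.

Lemma mxword_intertwine n m (A : Sigma -> 'M[R]_n) (B : Sigma -> 'M[R]_m)
    (E : 'M[R]_(n, m)) (c : Sigma -> R) :
  (forall s, A s *m E = c s *: (E *m B s)) ->
  forall w, mxword A w *m E = (\prod_(s <- w) c s) *: (E *m mxword B w).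
Proof.
move=> AE; elim=> [|s w IHw]; first by rewrite big_nil scale1r !mxword_nil mul1mx mulmx1.
rewrite !mxword_cons big_cons -mulmxA IHw -scalemxAr.
by rewrite !mulmxA AE -scalemxAl scalerA [c s * _]mulrC.
Qed.

End Mxword.

Section StochasticDilation.
Variable R : realFieldType.

Local Notation ones n := (const_mx 1 : 'cV[R]_n).

Lemma row_stochastic_intro m n (M : 'M[R]_(m, n)) :
  M \is a mxOver Num.nneg -> M *m ones n = ones m -> row_stochastic M.
Proof.
move=> /mxOverP M_nneg M1; split=> [i j|i]; first exact: M_nneg.
have /matrixP/(_ i 0) := M1; rewrite !mxE => <-.
by apply: eq_bigr => j _; rewrite mxE mulr1.
Qed.

Definition mx_abs m n (M : 'M[R]_(m, n)) : 'M[R]_(m, n) := map_mx Num.norm M.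

Definition l1norm m n (M : 'M[R]_(m, n)) : R := \sum_i \sum_j `|M i j|.

Lemma l1normN m n (M : 'M[R]_(m, n)) : l1norm (- M) = l1norm M.
Proof. by apply: eq_bigr => i _; apply: eq_bigr => j _; rewrite mxE normrN. Qed.

Lemma row_norm_sum_le_l1norm m n (M : 'M[R]_(m, n)) i :
  \sum_j `|M i j| <= l1norm M.
Proof.
rewrite /l1norm (bigD1 i) //= lerDl.
by apply: sumr_ge0 => i' _; apply: sumr_ge0.
Qed.

Lemma norm_entry_le_l1norm m n (M : 'M[R]_(m, n)) i j : `|M i j| <= l1norm M.
Proof.
apply: le_trans (row_norm_sum_le_l1norm M i).
by rewrite (bigD1 j) //= lerDl sumr_ge0.
Qed.

Definition dilation_scale m n (M : 'M[R]_(m, n)) : R := (1 + l1norm M)^-1.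

Lemma dilation_scale_gt0 m n (M : 'M[R]_(m, n)) : 0 < dilation_scale M.
Proof.
rewrite invr_gt0 ltr_wpDr //.
by apply: sumr_ge0 => i _; apply: sumr_ge0.
Qed.

Lemma dilation_scaleN m n (M : 'M[R]_(m, n)) :
  dilation_scale (- M) = dilation_scale M.
Proof. by rewrite /dilation_scale l1normN. Qed.

Lemma dilation_scaleM_le1 m n (M : 'M[R]_(m, n)) x :
  x <= l1norm M -> dilation_scale M * x <= 1.
Proof.
move=> x_le; have c_gt0 := dilation_scale_gt0 M.
rewrite mulrC ler_pdivrMr ?mul1r; last by rewrite -invr_gt0.
by rewrite ltW // ltr_pwDl.
Qed.

Lemma mulmx_ones1 m (M : 'M[R]_(m, 1)) : M *m ones 1 = M.
Proof. by rewrite [ones 1]mx11_scalar mxE mulmx1. Qed.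

Definition stochastic_rows p m (B : 'M[R]_(p, m)) : 'M[R]_(p, 1 + (m + m)) :=
  row_mx (ones p - dilation_scale B *: (mx_abs B *m ones m))
         ((dilation_scale B / 2) *: row_mx (mx_abs B + B) (mx_abs B - B)).

Definition signed_embedding m : 'M[R]_(1 + (m + m), m) :=
  col_mx 0 (col_mx 1%:M (- 1%:M)).

Lemma stochastic_rows_embedding p m (B : 'M[R]_(p, m)) :
  stochastic_rows B *m signed_embedding m = dilation_scale B *: B.
Proof.
rewrite mul_row_col mulmx0 add0r -scalemxAl mul_row_col mulmx1 mulmxN mulmx1.
by apply/matrixP => i j; rewrite !mxE; field.
Qed.

Lemma stochastic_rows_mul1 p m (B : 'M[R]_(p, m)) :
  stochastic_rows B *m ones (1 + (m + m)) = ones p.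
Proof.
have -> : ones (1 + (m + m)) = col_mx (ones 1) (col_mx (ones m) (ones m)).
  by rewrite !col_mx_const.
have absB2 : mx_abs B + B + (mx_abs B - B) = 2%:R *: mx_abs B.
  by apply/matrixP => i j; rewrite !mxE; ring.
rewrite mul_row_col mulmx_ones1 -scalemxAl mul_row_col -mulmxDl absB2 -scalemxAl.
by rewrite scalerA divfK ?pnatr_eq0 // subrK.
Qed.

Lemma stochastic_rows_nneg p m (B : 'M[R]_(p, m)) :
  stochastic_rows B \is a mxOver Num.nneg.
Proof.
have c_ge0 := ltW (dilation_scale_gt0 B).
apply: row_mxOver.
  apply/mxOverP => i j; rewrite !mxE nnegrE subr_ge0.
  under eq_bigr => k _ do rewrite !mxE mulr1.
  exact/dilation_scaleM_le1/row_norm_sum_le_l1norm.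
apply: mxOverZ; first by rewrite nnegrE divr_ge0.
apply: row_mxOver; apply/mxOverP => i j; rewrite !mxE nnegrE;
  have := ler_norm (B i j); have := ler_norm (- B i j); rewrite normrN; lra.
Qed.

Definition stochastic_dilation m (B : 'M[R]_m) : 'M[R]_(1 + (m + m)) :=
  col_mx (row_mx 1%:M 0) (col_mx (stochastic_rows B) (stochastic_rows (- B))).

Lemma stochastic_dilation_embedding m (B : 'M[R]_m) :
  stochastic_dilation B *m signed_embedding m =
  dilation_scale B *: (signed_embedding m *m B).
Proof.
rewrite !mul_col_mx !stochastic_rows_embedding dilation_scaleN mul_row_col.
by rewrite mulmx0 !mul0mx addr0 mul1mx mulNmx mul1mx !scale_col_mx scaler0.
Qed.

Lemma stochastic_dilation_mul1 m (B : 'M[R]_m) :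
  stochastic_dilation B *m ones (1 + (m + m)) = ones (1 + (m + m)).
Proof.
rewrite !mul_col_mx !stochastic_rows_mul1 !col_mx_const.
have -> : ones (1 + (m + m)) = col_mx (ones 1) (ones (m + m)) by rewrite col_mx_const.
by rewrite mul_row_col mul0mx addr0 mul1mx.
Qed.

Lemma stochastic_dilation_row_stochastic m (B : 'M[R]_m) :
  row_stochastic (stochastic_dilation B).
Proof.
apply: row_stochastic_intro; last exact: stochastic_dilation_mul1.
apply: col_mxOver; last by apply: col_mxOver; apply: stochastic_rows_nneg.
by apply: row_mxOver; rewrite ?mxOver_scalar ?mxOver0 ?nnegrE ?ler01.
Qed.

Lemma mulmx_indicator1 m n (M : 'M[R]_(m, n)) j :
  M *m indicator_col R [set j] = col j M.
Proof.
apply/matrixP => i k; rewrite !mxE (bigD1 j) //= big1 => [|l /negbTE l_neq_j].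
  by rewrite !mxE in_set1 eqxx mulr1 addr0.
by rewrite !mxE in_set1 l_neq_j mulr0.
Qed.

Definition accept_mx p (q : 'cV[R]_(1 + (1 + p))) : 'M[R]_(1 + (1 + p)) :=
  row_mx q (row_mx (const_mx 1 - q) 0).

Definition accepting_state p : 'I_(1 + (1 + p)) := lshift (1 + p) ord0.

Lemma accept_mx_indicator p (q : 'cV[R]_(1 + (1 + p))) :
  accept_mx q *m indicator_col R [set accepting_state p] = q.
Proof.
by rewrite mulmx_indicator1; apply/matrixP => i j; rewrite mxE row_mxEl (ord1 j).
Qed.

Lemma accept_mx_row_stochastic p (q : 'cV[R]_(1 + (1 + p))) :
  (forall i, 0 <= q i 0 <= 1) -> row_stochastic (accept_mx q).
Proof.
move=> q01; have q_ge0 i : 0 <= q i 0 by case/andP: (q01 i).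
have q_le1 i : q i 0 <= 1 by case/andP: (q01 i).
apply: row_stochastic_intro.
  apply: row_mxOver; first by apply/mxOverP => i j; rewrite (ord1 j) nnegrE.
  apply: row_mxOver; last by rewrite mxOver0 ?nnegrE.
  by apply/mxOverP => i j; rewrite (ord1 j) !mxE nnegrE subr_ge0.
have -> : ones (1 + (1 + p)) = col_mx (ones 1) (col_mx (ones 1) (ones p)).
  by rewrite !col_mx_const.
by rewrite !mul_row_col mul0mx addr0 -mulmxDl addrC subrK mulmx_ones1 !col_mx_const.
Qed.

Definition half_shift n (x : 'cV[R]_n) : 'cV[R]_n :=
  2^-1 *: (ones n + dilation_scale x *: x).

Lemma half_shift_prob n (x : 'cV[R]_n) i : 0 <= half_shift x i 0 <= 1.
Proof.
have c_gt0 := dilation_scale_gt0 x.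
have : `|dilation_scale x * x i 0| <= 1.
  by rewrite normrM gtr0_norm // dilation_scaleM_le1 // norm_entry_le_l1norm.
by rewrite ler_norml !mxE => /andP[? ?]; apply/andP; split; lra.
Qed.

End StochasticDilation.

Section GfaToPfa.
Variables (R : realFieldType) (Sigma : Type).

Definition gfa_shift k (G : gfa R Sigma k) (lambda : R) : gfa R Sigma (1 + k) :=
  GFA (row_mx (- lambda%:M) (gfa_u G)) (fun s => block_mx 1%:M 0 0 (gfa_A G s))
      (col_mx 1%:M (gfa_v G)).

Lemma gfa_fun_shift k (G : gfa R Sigma k) lambda w :
  gfa_fun (gfa_shift G lambda) w = gfa_fun G w - lambda.
Proof.
rewrite /gfa_fun /= mxword_block1 mul_row_block !mulmx0 addr0 add0r mulmx1.
by rewrite mul_row_col mulmx1 [LHS]mxE addrC; congr (_ + _); rewrite !mxE eqxx mulr1n.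
Qed.

Definition pfa_of_gfa m (H : gfa R Sigma m.+1) : pfa R Sigma (1 + (m.+1 + m.+1)) :=
  PFA (stochastic_rows (gfa_u H)) (fun s => stochastic_dilation (gfa_A H s))
      (@accept_mx _ (m + m.+1) (half_shift (signed_embedding R m.+1 *m gfa_v H)))
      [set accepting_state (m + m.+1)].

Lemma pfa_of_gfa_is_pfa m (H : gfa R Sigma m.+1) : is_pfa (pfa_of_gfa H).
Proof.
split; last split.
- by apply: row_stochastic_intro; [apply: stochastic_rows_nneg | apply: stochastic_rows_mul1].
- by move=> s; apply: stochastic_dilation_row_stochastic.
- by apply: accept_mx_row_stochastic => i; apply: half_shift_prob.
Qed.

Lemma pfa_of_gfa_fun m (H : gfa R Sigma m.+1) w :
  exists2 c, 0 < c & pfa_fun (pfa_of_gfa H) w = 2^-1 * (1 + c * gfa_fun H w).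
Proof.
have WE := mxword_intertwine (fun s => stochastic_dilation_embedding (gfa_A H s)) w.
have W1 := mxword_fixed (fun s => stochastic_dilation_mul1 (gfa_A H s)) w.
rewrite /pfa_fun /= -mulmxA accept_mx_indicator /half_shift -!scalemxAr mulmxDr.
rewrite -mulmxA W1 stochastic_rows_mul1 -scalemxAr !mulmxA.
rewrite -(mulmxA _ _ (signed_embedding R m.+1)) WE -scalemxAr mulmxA.
rewrite stochastic_rows_embedding -!scalemxAl !scalerA.
eexists; last by rewrite mxE [X in _ * X]mxE [X in _ + X]mxE mxE.
by rewrite !mulr_gt0 ?dilation_scale_gt0 // prodr_gt0 // => s _; apply: dilation_scale_gt0.
Qed.

Lemma pfa_of_gfa_accept m (H : gfa R Sigma m.+1) w :
  1 / 2 < pfa_fun (pfa_of_gfa H) w <-> 0 < gfa_fun H w.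
Proof.
have [c c_gt0 ->] := pfa_of_gfa_fun H w.
rewrite mul1r -[X in X < _]mulr1 ltr_pM2l ?invr_gt0 ?ltr0n // ltrDl.
by rewrite pmulr_rgt0.
Qed.

End GfaToPfa.

Theorem theorem3p2 (R : realType) (Sigma : finType) (k : nat)
  (G : gfa R Sigma k) (lambda : R) :
  exists (n : nat) (P : pfa R Sigma n),
    (n <= 2 * k + 6)%N /\ is_pfa P /\
    forall w : seq Sigma, (1 / 2 < pfa_fun P w) <-> (lambda < gfa_fun G w).
Proof.
exists (1 + (k.+1 + k.+1))%N, (pfa_of_gfa (gfa_shift G lambda)).
split; first lia.
split; first exact: pfa_of_gfa_is_pfa.
by move=> w; rewrite pfa_of_gfa_accept gfa_fun_shift subr_gt0.
Qed.
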